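(* In the truncated Gale–Shapley algorithm described in the context, with a weight function $w$ respecting the preferences, for every $i\ge 2$ we have $f_i(R)\le f_{i-1}(R)$.
   Context: Instance: a simple bipartite graph $\mathcal{G}=(R\cup B,E)$ (red nodes $R$, blue nodes $B$) without isolated nodes, each node having a linear preference order on its neighbours. Algorithm (distributed Gale–Shapley): each blue $b$ keeps $p(b)$ (current partner or $\bot$), initially $\bot$. Each red $r$ keeps a list $C(r)$, initially all neighbours in decreasing preference; $c(r)$ (candidate awaiting response, or $\bot$), initially $\bot$; $p(r)$ (partner or $\bot$), initially $\bot$. Each round consists of a blue turn then a red turn. Blue turn, for each $b$: let $P$ be the set of neighbours that sent `propose'; if $P=\emptyset$ do nothing. Otherwise let $Q=P\cup\{p(b)\}$ if $p(b)\ne\bot$, else $Q=P$; let $q$ be $b$'s most preferred node in $Q$; if $q\ne p(b)$, send `break' to $p(b)$ (if $p(b)\ne\bot$), send `accept' to $q$, and set $p(b)\gets q$; send `reject' to every $r\in P\setminus\{q\}$. Red turn, for each $r$: (1) if $c(r)\neq\bot$, receive the message from $c(r)$; if `accept' set $p(r)\gets c(r)$; if `reject' remove $c(r)$ from $C(r)$; then set $c(r)\gets\bot$. (2) If $p(r)\ne\bot$ and $p(r)$ sent `break', remove $p(r)$ from $C(r)$ and set $p(r)\gets\bot$. (3) If $p(r)=\bot$ and $C(r)$ is nonempty, set $c(r)$ to the first element of $C(r)$ and send `propose' to it. Notation: a subscript $i$ denotes the value at the end of round $i$. Let $w:E\to\mathbb{Z}_{>0}$ be a weight function respecting preferences: whenever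 a node $v$ prefers $x$ over $y$, $w(\{v,x\})\ge w(\{v,y\})$. The potential of $r\in R$ at the end of round $i$ is $f_i(r)=0$ if $r$ is matched ($p_i(r)\neq\bot$) or $C_i(r)$ is empty, and otherwise $f_i(r)=w(\{r,b\})$ where $b$ is the first element of $C_i(r)$; $f_i(R)=\sum_{r\in R}f_i(r)$. *)

From mathcomp Require Import all_boot.
Set Implicit Arguments. Unset Strict Implicit. Unset Printing Implicit Defensive.

Section GS.
Variables (R B : finType).

(* Preferences: [prefR r] lists the neighbours of red r in decreasing
   preference; [prefB b] lists the neighbours of blue b in decreasing
   preference.  "v prefers x over y" means x comes before y in the list. *)
Definition prefers (T : eqType) (s : seq T) (x y : T) : bool :=
  [&& x \in s, y \in s & index x s < index y s].

Record state := State {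
  pB : B -> option R;
  Cr : R -> seq B;
  cr : R -> option B;
  pR : R -> option B
}.

Definition init_state (prefR : R -> seq B) : state :=
  State (fun _ => None) prefR (fun _ => None) (fun _ => None).

(* Reds that sent 'propose' to b (in the red turn of the previous round). *)
Definition proposers (s : state) (b : B) : {set R} := [set r | cr s r == Some b].

Definition Qset (s : state) (b : B) : {set R} :=
  if pB s b is Some r0 then r0 |: proposers s b else proposers s b.

Definition best (prefB : B -> seq R) (s : state) (b : B) : option R :=
  [pick r in Qset s b |
     [forall r' in Qset s b, index r (prefB b) <= index r' (prefB b)]].

Definition newpB prefB (s : state) (b : B) : option R :=
  if proposers s b == set0 then pB s b
  else if best prefB s b != pB s b then best prefB s b else pB s b.

Definition accept_msg prefB (s : state) (b : B) (r : R) : bool :=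
  [&& proposers s b != set0, best prefB s b == Some r & best prefB s b != pB s b].

Definition reject_msg prefB (s : state) (b : B) (r : R) : bool :=
  (r \in proposers s b) && (best prefB s b != Some r).

Definition break_msg prefB (s : state) (b : B) (r : R) : bool :=
  [&& proposers s b != set0, best prefB s b != pB s b & pB s b == Some r].

(* Red turn, for a single red r: returns (C(r), c(r), p(r)). *)
Definition red_step prefB (s : state) (r : R) : seq B * option B * option B :=
  let '(p1, C1) :=
    match cr s r with
    | Some b =>
        (if accept_msg prefB s b r then Some b else pR s r,
         if reject_msg prefB s b r then filter (predC1 b) (Cr s r) else Cr s r)
    | None => (pR s r, Cr s r)
    end in
  let '(p2, C2) :=
    match p1 with
    | Some b' => if break_msg prefB s b' r then (None, filter (predC1 b') C1)
                 else (p1, C1)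
    | None => (p1, C1)
    end in
  let c3 := if p2 is None then ohead C2 else None in
  (C2, c3, p2).

Definition round prefB (s : state) : state :=
  State (newpB prefB s)
        (fun r => (red_step prefB s r).1.1)
        (fun r => (red_step prefB s r).1.2)
        (fun r => (red_step prefB s r).2).

Definition run prefR prefB (i : nat) : state := iter i (round prefB) (init_state prefR).

Definition pot (w : R -> B -> nat) (s : state) (r : R) : nat :=
  if pR s r is Some _ then 0 else if Cr s r is b :: _ then w r b else 0.

Definition potR (w : R -> B -> nat) (s : state) : nat := \sum_(r : R) pot w s r.

Definition respects (adj : R -> B -> bool) prefR prefB (w : R -> B -> nat) : Prop :=
  (forall r b, adj r b -> 0 < w r b) /\
  (forall r x y, prefers (prefR r) x y -> w r y <= w r x) /\
  (forall b x y, prefers (prefB b) x y -> w y b <= w x b).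

End GS.

From mathcomp Require Import all_boot.
Set Implicit Arguments. Unset Strict Implicit. Unset Printing Implicit Defensive.

(* Each list C(r) only loses elements and stays a subsequence of r's preference
   list, so dropping elements never raises the weight of its head.  The only
   red whose potential can rise in a round is one, say r, whose partner b
   breaks with it; b then accepts some r' that was proposing to b, i.e. whose
   old potential was w(r', b).  The new potential of r is at most w(r, b), and
   w(r, b) <= w(r', b) because b prefers r'.  Swapping r and r' is an
   involution of R under which every red's new potential is bounded by the old
   potential of its image, and summing over R gives the claim. *)

Lemma prefers_subseq_head (T : eqType) (s : seq T) b rest x :
  uniq s -> subseq (b :: rest) s -> x \in rest -> prefers s b x.
Proof.
move=> s_uniq sub_s x_rest.
have /andP[b_rest _] := subseq_uniq sub_s s_uniq.
have bx : b != x by apply: contraNneq b_rest => ->.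
move: s_uniq; have : mem2 s b x.
  rewrite mem2E (negPf bx); apply: subseq_trans sub_s.
  by rewrite /= eqxx sub1seq.
case/splitP2r => p1 p2; rewrite inE eq_sym (negPf bx) /= => x_p2.
rewrite cat_uniq /= => /and3P[_ /norP[b_p1 /hasPn p2_p1] _].
have x_p1 : x \notin p1 by apply: p2_p1.
rewrite /prefers !mem_cat !inE eqxx x_p2 !orbT !index_cat (negPf b_p1) (negPf x_p1) /=.
by rewrite eqxx (negPf bx) ltn_add2l.
Qed.

Section GaleShapley.
Variables (R B : finType) (prefR : R -> seq B) (prefB : B -> seq R).
Hypotheses (prefR_uniq : forall r, uniq (prefR r))
  (mem_prefRB : forall r b, (b \in prefR r) = (r \in prefB b)).

Definition consistent (s : state R B) : Prop :=
  [/\ forall r, subseq (Cr s r) (prefR r),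
      forall r b, cr s r = Some b -> pR s r = None /\ ohead (Cr s r) = Some b,
      forall r b, pR s r = Some b -> ohead (Cr s r) = Some b &
      forall b r, pB s b = Some r -> r \in prefB b].

Lemma consistent_head s r b :
  consistent s -> ohead (Cr s r) = Some b -> r \in prefB b.
Proof.
case=> subC _ _ _; rewrite -mem_prefRB; case ECr: (Cr s r) => [|b' C] //= [<-].
by apply: (mem_subseq (subC r)); rewrite ECr mem_head.
Qed.

Lemma best_spec s b r : best prefB s b = Some r ->
  r \in Qset s b /\ forall r', r' \in Qset s b -> index r (prefB b) <= index r' (prefB b).
Proof. by rewrite /best; case: pickP => // r' /andP[Qr' /forall_inP min_r'] [<-]. Qed.

Lemma best_exists s b : proposers s b != set0 -> exists r, best prefB s b = Some r.
Proof.
case/set0Pn=> r0 prop_r0.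
have Q_r0 : r0 \in Qset s b by rewrite /Qset; case: (pB s b) => // ?; rewrite inE prop_r0 orbT.
rewrite /best; case: pickP => [r _|no_best]; first by exists r.
case: (arg_minnP (fun r => index r (prefB b)) Q_r0) => r Q_r min_r.
move: (no_best r) => /= /negbT/nandP[]/negP[]; [exact: Q_r | exact/forall_inP].
Qed.

Variant red_step_spec s r : seq B * option B * option B -> Type :=
| RedBroken b of pR s r = Some b & cr s r = None & break_msg prefB s b r :
    red_step_spec s r (filter (predC1 b) (Cr s r), ohead (filter (predC1 b) (Cr s r)), None)
| RedKept b of pR s r = Some b & cr s r = None & ~~ break_msg prefB s b r :
    red_step_spec s r (Cr s r, None, Some b)
| RedIdle of pR s r = None & cr s r = None :
    red_step_spec s r (Cr s r, ohead (Cr s r), None)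
| RedAccepted b of pR s r = None & cr s r = Some b & accept_msg prefB s b r :
    red_step_spec s r (Cr s r, None, Some b)
| RedNotAccepted b of pR s r = None & cr s r = Some b & ~~ accept_msg prefB s b r :
    let C := if reject_msg prefB s b r then filter (predC1 b) (Cr s r) else Cr s r in
    red_step_spec s r (C, ohead C, None).

Lemma red_stepP s r : (forall b, cr s r = Some b -> pR s r = None) ->
  red_step_spec s r (red_step prefB s r).
Proof.
move=> cr_free; rewrite /red_step.
case Ecr: (cr s r) => [b|]; last first.
  case EpR: (pR s r) => [b|]; last exact: RedIdle.
  by case Ebr: (break_msg prefB s b r); [apply: RedBroken | apply: RedKept; rewrite ?Ebr].
have EpR := cr_free _ Ecr.
case Eacc: (accept_msg prefB s b r); last by rewrite EpR; apply: RedNotAccepted; rewrite ?Eacc.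
move: (Eacc); rewrite /accept_msg => /and3P[_ /eqP best_r best_new].
have -> : reject_msg prefB s b r = false by rewrite /reject_msg best_r eqxx andbF.
have -> : break_msg prefB s b r = false.
  by apply: contraNF best_new; rewrite /break_msg best_r => /and3P[_ _ /eqP ->].
exact: RedAccepted.
Qed.

Lemma consistent_init : consistent (init_state prefR).
Proof. by split=> //= r; apply: subseq_refl. Qed.

Lemma consistent_round s : consistent s -> consistent (round prefB s).
Proof.
move=> cs; have [subC crP pRP pBP] := cs.
have cr_free r b : cr s r = Some b -> pR s r = None by case/crP.
split=> [r|r b|r b|b r] /=.
- have subCr := subC r.
  have subF b' : subseq (filter (predC1 b') (Cr s r)) (prefR r).
    exact: subseq_trans (filter_subseq _ _) subCr.
  by case: (red_stepP (cr_free r)) => //= b' *; case: ifP.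
- by case: (red_stepP (cr_free r)).
- case: (red_stepP (cr_free r)) => // [b' EpR _ _ [<-]|b' _ Ecr _ [<-]]; first exact: pRP.
  by case: (crP _ _ Ecr).
- have best_pref : best prefB s b = Some r -> r \in prefB b.
    case/best_spec=> + _; rewrite /Qset.
    have prop_pref : r \in proposers s b -> r \in prefB b.
      by rewrite inE => /eqP /crP[_]; apply: consistent_head.
    case EpB: (pB s b) => [r0|]; last exact: prop_pref.
    by case/setU1P => [->|]; [apply: pBP | apply: prop_pref].
  by rewrite /newpB; do 2?case: ifP => _; by [apply: pBP | apply: best_pref].
Qed.

Lemma consistent_run i : consistent (run prefR prefB i).
Proof.
elim: i => [|i IHi]; first exact: consistent_init.
by rewrite /run iterS; apply: consistent_round.
Qed.

Lemma break_pB s b r : break_msg prefB s b r -> pB s b = Some r.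
Proof. by case/and3P=> _ _ /eqP. Qed.

Lemma break_best s b r r' : consistent s -> break_msg prefB s b r ->
  best prefB s b = Some r' -> [/\ r' != r, cr s r' = Some b & pR s r' = None].
Proof.
case=> _ crP _ _ brk best_r'; have pB_r := break_pB brk.
have r'r : r' != r.
  by apply: contraTneq brk => r'_r; rewrite /break_msg best_r' pB_r r'_r eqxx andbF.
have [+ _] := best_spec best_r'; rewrite /Qset pB_r in_setU1 (negPf r'r) inE => /eqP cr_r'.
by have [] := crP _ _ cr_r'.
Qed.

Definition exchange (s : state R B) (r : R) : R :=
  match pR s r with
  | Some b => if break_msg prefB s b r then odflt r (best prefB s b) else r
  | None =>
      if cr s r is Some b then
        if pB s b is Some r0 then
          if [&& break_msg prefB s b r0, best prefB s b == Some r & pR s r0 == Some b]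
          then r0 else r
        else r
      else r
  end.

Lemma exchangeK s : consistent s -> involutive (exchange s).
Proof.
move=> cs r; rewrite {2}/exchange.
case EpR: (pR s r) => [b|].
  case Ebrk: (break_msg prefB s b r); last by rewrite /exchange EpR Ebrk.
  case Ebest: (best prefB s b) => [r'|] /=; last by rewrite /exchange EpR Ebrk Ebest.
  have [_ cr_r' pR_r'] := break_best cs Ebrk Ebest.
  by rewrite /exchange pR_r' cr_r' (break_pB Ebrk) Ebrk Ebest EpR !eqxx.
case Ecr: (cr s r) => [b|]; last by rewrite /exchange EpR Ecr.
case EpB: (pB s b) => [r0|]; last by rewrite /exchange EpR Ecr EpB.
case: ifP => [/and3P[brk /eqP best_r /eqP pR_r0]|Ecnd];
  last by rewrite /exchange EpR Ecr EpB Ecnd.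
by rewrite /exchange pR_r0 brk best_r.
Qed.

Section Potential.
Variable w : R -> B -> nat.
Hypotheses (w_prefR : forall r x y, prefers (prefR r) x y -> w r y <= w r x)
  (w_prefB : forall b x y, prefers (prefB b) x y -> w y b <= w x b).

(* For an unmatched red, [pot w s r] is convertible to [head_weight r (Cr s r)]. *)
Definition head_weight r (C : seq B) : nat := if C is b :: _ then w r b else 0.

Lemma head_weight_subseq r C C' :
  subseq C (prefR r) -> subseq C' C -> head_weight r C' <= head_weight r C.
Proof.
case: C' => [|x C'] // subC /(mem_subseq)/(_ x (mem_head _ _)).
case: C subC => [|b C] //= subC; rewrite inE => /predU1P[-> //|x_C].
exact/w_prefR/(prefers_subseq_head (prefR_uniq r) subC).
Qed.

Lemma best_weight_max s b r r' : best prefB s b = Some r' ->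
  r \in Qset s b -> r \in prefB b -> r' \in prefB b -> w r b <= w r' b.
Proof.
move=> best_r' Q_r r_b r'_b; have [_ min_r'] := best_spec best_r'.
have [-> //|r'r] := eqVneq r' r; apply: w_prefB.
rewrite /prefers r'_b r_b ltn_neqAle min_r' // andbT.
by apply: contra r'r => /eqP/index_inj-> //.
Qed.

Lemma pot_round_le s r : consistent s -> pot w (round prefB s) r <= pot w s (exchange s r).
Proof.
move=> cs; have [subC crP pRP pBP] := cs.
have cr_free r1 b : cr s r1 = Some b -> pR s r1 = None by case/crP.
rewrite /pot /=.
case: (red_stepP (cr_free r))
  => [b EpR Ecr brk|b EpR Ecr _|EpR Ecr|b EpR Ecr _|b EpR Ecr nacc] //=.
- have [|r' best_r'] := best_exists (s := s) (b := b); first by case/and3P: brk.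
  have [_ cr_r' pR_r'] := break_best cs brk best_r'.
  rewrite /exchange EpR brk best_r' /= pR_r'.
  apply: leq_trans (head_weight_subseq (subC r) (filter_subseq _ _)) _.
  have [_ head_r'] := crP _ _ cr_r'; have head_r := pRP _ _ EpR.
  have Q_r : r \in Qset s b by rewrite /Qset (break_pB brk) setU11.
  move: (best_weight_max best_r' Q_r (pBP _ _ (break_pB brk)) (consistent_head cs head_r')).
  by case: (Cr s r) head_r => // ? ? [->]; case: (Cr s r') head_r' => // ? ? [->].
- by rewrite /exchange EpR Ecr EpR.
- have -> : exchange s r = r.
    rewrite /exchange EpR Ecr; case: (pB s b) => // r0.
    case: ifP => // /and3P[brk /eqP best_r _]; case/negP: nacc.
    by move: brk; rewrite /accept_msg /break_msg best_r eqxx => /and3P[-> -> _].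
  rewrite EpR; apply: (head_weight_subseq (subC r)).
  by case: ifP => _; [apply: filter_subseq | apply: subseq_refl].
Qed.

Lemma potR_round s : consistent s -> potR w (round prefB s) <= potR w s.
Proof.
move=> cs; rewrite /potR [X in _ <= X](reindex_inj (can_inj (exchangeK cs))).
by apply: leq_sum => r _; apply: pot_round_le.
Qed.

End Potential.

End GaleShapley.

Theorem lemma3 (R B : finType) (adj : R -> B -> bool)
  (prefR : R -> seq B) (prefB : B -> seq R) (w : R -> B -> nat) :
  (forall r : R, exists b : B, adj r b) ->
  (forall b : B, exists r : R, adj r b) ->
  (forall r, uniq (prefR r)) -> (forall r b, (b \in prefR r) = adj r b) ->
  (forall b, uniq (prefB b)) -> (forall b r, (r \in prefB b) = adj r b) ->
  respects adj prefR prefB w ->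
  forall i : nat, 2 <= i ->
    potR w (run prefR prefB i) <= potR w (run prefR prefB i.-1).
Proof.
move=> _ _ prefR_uniq mem_prefR _ mem_prefB [_ [w_prefR w_prefB]] [|i] // _.
have mem_prefRB r b : (b \in prefR r) = (r \in prefB b) by rewrite mem_prefR mem_prefB.
rewrite /run iterS /=.
exact: (potR_round prefR_uniq mem_prefRB w_prefR w_prefB (consistent_run mem_prefRB i)).
Qed.
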